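(* A sequence $a=(a_1,\dots,a_d)\in\mathbb{R}^d$ is a Nuij sequence with a universal determinantal representation if and only if there exist $\alpha,\beta\in\mathbb{R}$ such that $$a_i=\frac{1}{i!}\,t_{\alpha,\beta}(i)=\frac{1}{i!}(\alpha-\beta)^{i-1}\big(\alpha+(i-1)\beta\big),\qquad i=1,\dots,d.$$
   Context: A polynomial in $\mathbb{R}[z]$ is hyperbolic if all its roots are real. A sequence $a\in\mathbb{R}^d$ is a Nuij sequence if for every hyperbolic $p\in\mathbb{R}[z]$ of degree $d$, $p_a(z,s):=p(z)+\sum_{k=1}^d a_k s^k p^{(k)}(z)$ is hyperbolic for all $s\in\mathbb{R}$. A Nuij sequence $a$ admits a universal determinantal representation if there exists a real symmetric $d\times d$ matrix $A_a$ such that for every monic hyperbolic polynomial $p(z)=(z+\lambda_1)\cdots(z+\lambda_d)$ of degree $d$ one has $p_a(z,s)=\det(zI+D+sA_a)$, where $D$ is the diagonal matrix with diagonal entries $\lambda_1,\dots,\lambda_d$ in an arbitrary order. For $\alpha,\beta\in\mathbb{R}$ and $i\ge1$, $t_{\alpha,\beta}(i)$ denotes the determinant of the $i\times i$ matrix with all diagonal entries $\alpha$ and all off-diagonal entries $\beta$, which equals $(\alpha-\beta)^{i-1}(\alpha+(i-1)\beta)$. *)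

From HB Require Import structures.
From mathcomp Require Import all_boot all_order all_algebra.
From mathcomp Require Import reals.
From mathcomp.real_closed Require Import complex.
Set Implicit Arguments. Unset Strict Implicit. Unset Printing Implicit Defensive.
Import Order.TTheory GRing.Theory Num.Theory.
Local Open Scope ring_scope.

Definition hyperbolic (R : realType) (p : {poly R}) : Prop :=
  p != 0 /\
  forall z : R[i], root (map_poly (fun x : R => Complex x 0) p) z -> z \is Num.real.

(* p_a(z,s) = p(z) + sum_{k=1}^d a_k s^k p^(k)(z), as a polynomial in z for fixed s;
   a : 'I_d -> R with a_k := a (k-1). *)
Definition p_a (R : realType) (d : nat) (a : 'I_d -> R) (p : {poly R}) (s : R)
  : {poly R} :=
  p + \sum_(i < d) (a i * s ^+ i.+1) *: p^`(i.+1).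

Definition nuij_seq (R : realType) (d : nat) (a : 'I_d -> R) : Prop :=
  forall p : {poly R}, hyperbolic p -> (size p).-1 = d ->
    forall s : R, hyperbolic (p_a a p s).

(* universal determinantal representation: one real symmetric A such that for
   every monic hyperbolic p = prod (z + lambda_i) (lambda in any order),
   p_a(z,s) = det(zI + D + sA). *)
Definition univ_det_rep (R : realType) (d : nat) (a : 'I_d -> R) : Prop :=
  exists A : 'M[R]_d, A^T = A /\
    forall (lam : 'I_d -> R) (s : R),
      p_a a (\prod_(i < d) ('X + (lam i)%:P)) s =
      \det ('X%:M + map_mx polyC (diag_mx (\row_i lam i) + s *: A)).

Definition t_ab (R : realType) (alpha beta : R) (i : nat) : R :=
  \det (\matrix_(j < i, k < i) (if j == k then alpha else beta)).

From HB Require Import structures.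
From mathcomp Require Import all_boot all_order all_algebra.
From mathcomp Require Import fingroup perm ring.
From mathcomp Require Import reals.
From mathcomp.real_closed Require Import complex.
Set Implicit Arguments. Unset Strict Implicit. Unset Printing Implicit Defensive.
Import Order.TTheory GRing.Theory Num.Theory.
Local Open Scope ring_scope.

(* Evaluating a representation [p_a(z,s) = det(zI + D + sA)] at [z = 0], [s = 1] and
   expanding [det(D + A)] along the diagonal entries of [D] shows that every principal
   minor [det A_S] equals [|S|! a_|S|]: all principal minors of a given size agree.
   Those of sizes 1, 2 and 3 force [A = E T E] with [T = T_(alpha,beta)] and [E] a
   diagonal sign matrix, so [det A_S = t_(alpha,beta)(|S|)].  Conversely, for
   [A = T_(alpha,beta)] the same expansion after the shift [z -> z + x] gives the
   representation, and [det(zI + D + sA)] is the characteristic polynomial of a real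
   symmetric matrix, hence hyperbolic. *)

Section Determinants.
Variable R : comNzRingType.

(* Its determinant is the principal minor of [M] on the rows and columns in [S]. *)
Definition principal_mx n (S : {set 'I_n}) (M : 'M[R]_n) : 'M[R]_n :=
  \matrix_(i, j) (if i \in S then M i j else (i == j)%:R).

Definition ab_mx n (al be : R) : 'M[R]_n :=
  \matrix_(i, j) (if i == j then al else be).

Lemma det_addmx_rows n (U V : 'M[R]_n) :
  \det (U + V) =
  \sum_(J : {set 'I_n}) \det (\matrix_(i, j) (if i \in J then U i j else V i j)).
Proof.
rewrite /determinant.
under eq_bigr => s _.
  rewrite (eq_bigr (fun i => U i (s i) + V i (s i))); last by move=> i _; rewrite mxE.
  rewrite bigA_distr /= big_distrr /=.
over.
rewrite exchange_big /=; apply: eq_bigr => J _; apply: eq_bigr => s _.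
by congr (_ * _); apply: eq_bigr => i _; rewrite mxE.
Qed.

Lemma det_diag_addmx n (x : 'I_n -> R) (M : 'M[R]_n) :
  \det (diag_mx (\row_j x j) + M) =
  \sum_(S : {set 'I_n}) (\prod_(j in ~: S) x j) * \det (principal_mx S M).
Proof.
rewrite addrC det_addmx_rows; apply: eq_bigr => S _.
have -> : \matrix_(i, j) (if i \in S then M i j else diag_mx (\row_k x k) i j)
   = diag_mx (\row_j (if j \in S then 1 else x j)) *m principal_mx S M.
  apply/matrixP => i j; rewrite mul_diag_mx !mxE.
  by case: (i \in S); rewrite ?mul1r // mulr_natr.
rewrite det_mulmx det_diag; congr (_ * _).
by rewrite [RHS]big_mkcond; apply: eq_bigr => i _; rewrite !mxE in_setC; case: (i \in S).
Qed.

Lemma det_principal_mxZ n (S : {set 'I_n}) (c : R) (M : 'M[R]_n) :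
  \det (principal_mx S (c *: M)) = c ^+ #|S| * \det (principal_mx S M).
Proof.
have -> : principal_mx S (c *: M) =
    diag_mx (\row_j (if j \in S then c else 1)) *m principal_mx S M.
  apply/matrixP => i j; rewrite mul_diag_mx !mxE.
  by case: (i \in S); rewrite ?mul1r.
rewrite det_mulmx det_diag -prodr_const; congr (_ * _).
by rewrite [RHS]big_mkcond; apply: eq_bigr => i _; rewrite mxE.
Qed.

Lemma det_principal_mx_scalar n (S : {set 'I_n}) (c : R) :
  \det (principal_mx S (c%:M : 'M[R]_n)) = c ^+ #|S|.
Proof.
rewrite -scalemx1 det_principal_mxZ.
have -> : principal_mx S 1%:M = 1%:M.
  by apply/matrixP => i j; rewrite !mxE; case: (i \in S).
by rewrite det1 mulr1.
Qed.

Lemma sylvester_det n k (U : 'M[R]_(n, k)) (V : 'M[R]_(k, n)) :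
  \det (1%:M + U *m V) = \det (1%:M + V *m U).
Proof.
have e1 : block_mx 1%:M U (- V) 1%:M
   = block_mx 1%:M 0 (- V) 1%:M *m block_mx 1%:M U 0 (1%:M + V *m U).
  rewrite mulmx_block !mul1mx !mul0mx !mulmx1 ?mulmx0 !addr0 ?add0r mulNmx.
  by rewrite [1%:M + _]addrC addKr.
have e2 : block_mx 1%:M U (- V) 1%:M
   = block_mx (1%:M + U *m V) U 0 1%:M *m block_mx 1%:M 0 (- V) 1%:M.
  rewrite mulmx_block !mul1mx !mul0mx !mulmx1 ?mulmx0 ?addr0 ?add0r mulmxN.
  by rewrite addrK.
have := congr1 determinant e1; rewrite e2 !det_mulmx.
rewrite (det_lblock (1%:M : 'M[R]_n)) (det_ublock (_ : 'M[R]_n)).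
by rewrite (det_ublock (1%:M : 'M[R]_n)) !det1 !mul1r !mulr1.
Qed.

(* Sylvester's identity for [U = e_f] and [V = M_f - e_f^T], with [e_f] the 0/1
   matrix of [f] and [M_f] the rows of [M] indexed by [f]. *)
Lemma det_principal_mx_inj n k (f : 'I_k -> 'I_n) (M : 'M[R]_n) : injective f ->
  \det (principal_mx (f @: setT) M) = \det (\matrix_(l, m) M (f l) (f m)).
Proof.
move=> injf.
pose U : 'M[R]_(n, k) := \matrix_(i, l) (i == f l)%:R.
pose V : 'M[R]_(k, n) := \matrix_(l, j) (M (f l) j - (f l == j)%:R).
have -> : principal_mx (f @: setT) M = 1%:M + U *m V.
  apply/matrixP => i j; rewrite !mxE.
  case: imsetP => [[l0 _ ->]|i_notin].
    rewrite (bigD1 l0) //= big1 ?addr0; last first.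
      by move=> l /negbTE nl; rewrite !mxE (inj_eq injf) eq_sym nl mul0r.
    by rewrite !mxE eqxx mul1r addrC subrK.
  rewrite big1 ?addr0 //= => l _; rewrite !mxE.
  by case: eqP => [e|_]; [case: i_notin; exists l | rewrite mul0r].
have -> : \matrix_(l, m) M (f l) (f m) = 1%:M + V *m U.
  apply/matrixP => l m; rewrite !mxE.
  rewrite (bigD1 (f m)) //= big1 ?addr0; last first.
    by move=> j /negbTE nj; rewrite !mxE nj mulr0.
  by rewrite !mxE eqxx mulr1 (inj_eq injf) addrC subrK.
exact: sylvester_det.
Qed.

Lemma det_principal_mx_enum n (S : {set 'I_n}) (M : 'M[R]_n) :
  \det (principal_mx S M) =
  \det (\matrix_(l < #|S|, m < #|S|) M (enum_val l) (enum_val m)).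
Proof.
have SE : S = @enum_val _ (mem S) @: setT.
  apply/setP => x; apply/idP/imsetP => [xS|[i _ ->]]; last exact: enum_valP.
  by exists (enum_rank_in xS x); rewrite ?in_setT // enum_rankK_in.
rewrite {1}SE det_principal_mx_inj //; exact: enum_val_inj.
Qed.

Lemma det_sign_conj k (T : 'M[R]_k) (e : 'I_k -> R) :
  (forall l, e l ^+ 2 = 1) ->
  \det (\matrix_(l, m) (e l * T l m * e m)) = \det T.
Proof.
move=> e2.
have -> : \matrix_(l, m) (e l * T l m * e m)
    = diag_mx (\row_l e l) *m T *m diag_mx (\row_l e l).
  by apply/matrixP => l m; rewrite mul_mx_diag mul_diag_mx !mxE.
rewrite !det_mulmx det_diag mulrC mulrA -expr2 -prodrXl.
by rewrite big1 ?mul1r // => i _; rewrite mxE e2.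
Qed.

Lemma det_principal_signed_ab_mx n (A : 'M[R]_n) al be (e : 'I_n -> R) :
  (forall i, e i ^+ 2 = 1) -> (forall i, A i i = al) ->
  (forall i j, i != j -> A i j = be * e i * e j) ->
  forall S, \det (principal_mx S A) = \det (ab_mx #|S| al be).
Proof.
move=> e2 Adiag Aoff S; rewrite det_principal_mx_enum.
rewrite -(det_sign_conj (ab_mx #|S| al be) (e := fun l => e (enum_val l))) //.
congr determinant; apply/matrixP => l m; rewrite !mxE.
have [->|nlm] := eqVneq l m; first by rewrite Adiag mulrC mulrA -expr2 e2 mul1r.
by rewrite Aoff ?(inj_eq enum_val_inj) //; ring.
Qed.

Lemma det_mx22 (B : 'M[R]_2) : \det B = B 0 0 * B 1 1 - B 0 1 * B 1 0.
Proof.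
rewrite (expand_det_row _ 0) !big_ord_recl big_ord0 addr0 /cofactor !det_mx11 !mxE /=.
rewrite expr0 mul1r expr1 mulN1r mulrN.
by congr (B _ _ * B _ _ - B _ _ * B _ _); apply/val_inj.
Qed.

Lemma det_mx33 (B : 'M[R]_3) : \det B =
  B 0 0 * (B 1 1 * B 2 2 - B 1 2 * B 2 1)
  - B 0 1 * (B 1 0 * B 2 2 - B 1 2 * B 2 0)
  + B 0 2 * (B 1 0 * B 2 1 - B 1 1 * B 2 0).
Proof.
rewrite (expand_det_row _ 0) !big_ord_recl big_ord0 addr0 /cofactor !det_mx22 !mxE /=.
pose B' i j := B (inord i) (inord j).
have E (x y : 'I_3) : B x y = B' x y by rewrite /B' !inord_val.
by rewrite !E /= expr0 expr1 !mul1r mulN1r; ring.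
Qed.

(* Möbius inversion: testing against the 0/1 vectors [mu] gives
   [sum_(T ⊆ V) c (~: T) = 0] for all [V]. *)
Lemma subset_coef_eq0 n (c : {set 'I_n} -> R) :
  (forall mu : 'I_n -> R, \sum_(S : {set 'I_n}) c S * \prod_(j in ~: S) mu j = 0) ->
  forall S, c S = 0.
Proof.
move=> E.
have H (V : {set 'I_n}) : \sum_(T : {set 'I_n} | T \subset V) c (~: T) = 0.
  rewrite -[RHS](E (fun j => (j \in V)%:R)).
  rewrite [RHS](reindex_inj (@setC_inj _)) /= big_mkcond /=.
  apply: eq_bigr => T _; rewrite setCK.
  case: (boolP (T \subset V)) => [sub|/subsetPn [j jT jV]].
    by rewrite big1 ?mulr1 // => j jT; rewrite (subsetP sub j jT).
  by rewrite (bigD1 j) //= (negbTE jV) mul0r mulr0.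
suff K m (T : {set 'I_n}) : (#|T| < m)%N -> c (~: T) = 0.
  by move=> S; rewrite -(setCK S); apply: (K (#|~: S|).+1).
elim: m T => [//|m IH] T hT.
have := H T; rewrite (bigD1 T) //= big1 ?addr0 // => U /andP [UT nUT].
have UT' : (#|U| < #|T|)%N by apply: proper_card; rewrite properEneq nUT UT.
exact: IH (leq_trans UT' hT).
Qed.

End Determinants.

Lemma eq_poly_horner (R : numDomainType) (p q : {poly R}) :
  (forall x, p.[x] = q.[x]) -> p = q.
Proof.
move=> pq; apply/eqP; rewrite -subr_eq0; apply/eqP.
apply: (@roots_geq_poly_eq0 _ _ [seq i%:R | i <- iota 0 (size (p - q))]).
- by apply/allP => _ /mapP [i _ ->]; rewrite /root hornerD hornerN pq subrr.
- by rewrite map_inj_uniq ?iota_uniq // => i j /eqP; rewrite eqr_nat => /eqP.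
- by rewrite size_map size_iota.
Qed.

Section PolynomialDeterminants.
Variable R : comNzRingType.

Lemma prod_XaddC_det n (mu : 'I_n -> R) :
  \prod_(j < n) ('X + (mu j)%:P) = \det (diag_mx (\row_j (mu j)%:P) + 'X%:M).
Proof.
have -> : diag_mx (\row_j (mu j)%:P) + 'X%:M = diag_mx (\row_j ('X + (mu j)%:P)).
  apply/matrixP => i j; rewrite !mxE; case: eqP => _ /=; first by rewrite addrC.
  by rewrite !mulr0n addr0.
by rewrite det_diag; apply: eq_bigr => i _; rewrite mxE.
Qed.

Lemma coef_prod_XaddC n (mu : 'I_n -> R) k :
  (\prod_(j < n) ('X + (mu j)%:P))`_k =
  \sum_(S : {set 'I_n} | #|S| == k) \prod_(j in ~: S) mu j.
Proof.
rewrite prod_XaddC_det det_diag_addmx coef_sum [RHS]big_mkcond /=.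
apply: eq_bigr => S _; rewrite det_principal_mx_scalar -rmorph_prod coefCM coefXn.
by rewrite eq_sym; case: eqP => _; rewrite ?mulr1 ?mulr0.
Qed.

Lemma horner_det_XaddC n (N : 'M[R]_n) x :
  (\det ('X%:M + map_mx polyC N)).[x] = \det (x%:M + N).
Proof.
rewrite -horner_evalE -det_map_mx; congr determinant; apply/matrixP => i j.
rewrite !mxE; apply: etrans (horner_evalE x _) _.
by rewrite hornerD hornerMn hornerX hornerC.
Qed.

Lemma derivn_comp_XaddC (p : {poly R}) x n :
  (p \Po ('X + x%:P))^`(n) = p^`(n) \Po ('X + x%:P).
Proof.
elim: n => [|n IH] //; rewrite !derivnS IH deriv_comp derivD derivX derivC.
by rewrite addr0 mulr1.
Qed.

Lemma horner_comp_XaddC (p : {poly R}) x y : (p \Po ('X + x%:P)).[y] = p.[y + x].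
Proof. by rewrite horner_comp hornerD hornerX hornerC. Qed.

Lemma prod_XaddC_comp n (lam : 'I_n -> R) x :
  (\prod_(j < n) ('X + (lam j)%:P)) \Po ('X + x%:P) =
  \prod_(j < n) ('X + (lam j + x)%:P).
Proof.
rewrite -[LHS]/(comp_poly ('X + x%:P) _) rmorph_prod /=.
apply: eq_bigr => j _; rewrite comp_polyD comp_polyX comp_polyC polyCD.
by rewrite -addrA [x%:P + _]addrC.
Qed.

End PolynomialDeterminants.

Lemma det_ab_mx (F : fieldType) k (al be : F) :
  \det (ab_mx k.+1 al be) = (al - be) ^+ k * (al + k%:R * be).
Proof.
have [->|neq] := eqVneq al be.
  case: k => [|k]; first by rewrite det_mx11 !mxE /= expr0 mul1r mul0r addr0.
  rewrite subrr expr0n /= mul0r.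
  apply: (determinant_alternate (i1 := 0) (i2 := 1)) => // j.
  by rewrite !mxE; case: ifP; case: ifP.
have nz : al - be != 0 by rewrite subr_eq0.
pose U : 'M[F]_(k.+1, 1) := const_mx 1.
pose V : 'M[F]_(1, k.+1) := const_mx (be / (al - be)).
have -> : ab_mx k.+1 al be = (al - be) *: (1%:M + U *m V).
  apply/matrixP => i j; rewrite !mxE big_ord1 !mxE mul1r.
  by case: eqP => _ /=; field.
rewrite detZ sylvester_det det_mx11 !mxE.
under eq_bigr do rewrite !mxE mulr1.
rewrite sumr_const card_ord exprSr -mulrA; congr (_ * _).
by rewrite eqxx /= mulrSr -[_ *+ k]mulr_natr; field.
Qed.

(* Normalize by the first row, [e i = A 0 i / be]; the triangle condition then
   recovers the remaining entries. *)
Lemma sign_pattern (F : fieldType) n (A : 'M[F]_n) be :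
  A^T = A ->
  (forall i j, i != j -> A i j ^+ 2 = be ^+ 2) ->
  (forall i j k, i != j -> j != k -> i != k -> A i j * A j k * A i k = be ^+ 3) ->
  exists e : 'I_n -> F,
    (forall i, e i ^+ 2 = 1) /\ forall i j, i != j -> A i j = be * e i * e j.
Proof.
move=> AT Asq Atri.
have Asym i j : A j i = A i j by rewrite -[in LHS]AT mxE.
have [be0|nbe] := eqVneq be 0.
  exists (fun=> 1); split=> [i|i j ij]; first by rewrite expr1n.
  by apply/eqP; rewrite be0 !mul0r -sqrf_eq0 Asq // be0 expr0n.
case: n A AT Asq Atri Asym => [|n] A _ Asq Atri Asym.
  by exists (fun=> 1); split=> [[]|[]].
have Anz i j : i != j -> A i j != 0.
  by move=> ij; rewrite -sqrf_eq0 Asq // sqrf_eq0.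
exists (fun i => if i == 0 then 1 else A 0 i / be); split=> [i|i j ij].
  case: eqP => [_|/eqP i0]; first by rewrite expr1n.
  by rewrite expr_div_n Asym Asq // divff // sqrf_eq0.
move: ij; case: (eqVneq i 0) => [->|i0]; case: (eqVneq j 0) => [->|j0] ij //.
- by field.
- by rewrite Asym; field.
have [i0' j0'] : (0 != i) * (0 != j) by rewrite !(eq_sym 0).
have tri := Atri _ _ _ i0' ij j0'.
apply: (mulIf (Anz _ _ j0')); apply: (mulIf (Anz _ _ i0')).
transitivity (be ^+ 3); first by rewrite -tri; ring.
transitivity (be^-1 * (A 0 i ^+ 2 * A 0 j ^+ 2)); first by rewrite !Asq //; field.
by field.
Qed.

Lemma cube_root_sqr (F : fieldType) (b2 P : F) :
  P ^+ 2 = b2 ^+ 3 -> (P / b2) ^+ 2 = b2 /\ (P / b2) ^+ 3 = P.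
Proof.
move=> P2.
have [b0|nb] := eqVneq b2 0.
  have /eqP P0 : P == 0 by rewrite -sqrf_eq0 P2 b0 expr0n.
  by rewrite b0 P0 mul0r !expr0n.
have nP : P != 0 by rewrite -sqrf_eq0 P2 expf_eq0 negb_and nb orbT.
split; rewrite expr_div_n ?P2; first by field.
by rewrite -P2; field.
Qed.

(* With a triangle of indices, [be] must be [P / b2]; otherwise only its square matters. *)
Lemma off_diag_scale (R : rcfType) n (A : 'M[R]_n) b2 P :
  (forall i j, i != j -> A i j ^+ 2 = b2) ->
  (forall i j k, i != j -> j != k -> i != k -> A i j * A j k * A i k = P) ->
  exists be, (forall i j, i != j -> A i j ^+ 2 = be ^+ 2) /\
    forall i j k, i != j -> j != k -> i != k -> A i j * A j k * A i k = be ^+ 3.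
Proof.
move=> Asq Atri.
have [/existsP [x /existsP [y /existsP [z /and3P [xy yz xz]]]]|notri] :=
  boolP [exists i : 'I_n, exists j : 'I_n, exists k : 'I_n, [&& i != j, j != k & i != k]].
  have P2 : P ^+ 2 = b2 ^+ 3.
    by rewrite -(Atri x y z xy yz xz) !exprMn (Asq _ _ xy) (Asq _ _ yz) (Asq _ _ xz); ring.
  have [be2 be3] := cube_root_sqr P2.
  by exists (P / b2); split=> [i j ij|i j k ij jk ik]; rewrite ?be2 ?be3; auto.
exists (Num.sqrt b2); split=> [i j ij|i j k ij jk ik].
  by rewrite sqr_sqrtr -(Asq i j ij) ?sqr_ge0.
by case/negP: notri; apply/existsP; exists i; apply/existsP; exists j;
  apply/existsP; exists k; rewrite ij jk ik.
Qed.

Section EqualPrincipalMinors.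
Variables (R : rcfType) (n : nat) (A : 'M[R]_n) (c : nat -> R).
Hypotheses (AT : A^T = A) (minorA : forall S, \det (principal_mx S A) = c #|S|).

Let Asym i j : A j i = A i j. Proof. by rewrite -[in LHS]AT mxE. Qed.

Lemma det_submx_uniq k (t : k.-tuple 'I_n) :
  uniq t -> \det (\matrix_(l, m) A (tnth t l) (tnth t m)) = c k.
Proof.
move=> /tuple_uniqP tI.
by rewrite -det_principal_mx_inj // minorA card_imset // cardsT card_ord.
Qed.

Lemma principal_minor1 i : A i i = c 1.
Proof. by rewrite -(det_submx_uniq (t := [tuple i])) // det_mx11 mxE. Qed.

Lemma principal_minor2 i j : i != j -> A i j ^+ 2 = c 1 ^+ 2 - c 2.
Proof.
move=> ij; rewrite -(det_submx_uniq (t := [tuple i; j])) /= ?inE ?andbT //.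
by rewrite det_mx22 !mxE /= !principal_minor1 (Asym j i); ring.
Qed.

Lemma principal_minor3 i j k : i != j -> j != k -> i != k ->
  A i j * A j k * A i k = (c 3 - c 1 ^+ 3 + 3%:R * c 1 * (c 1 ^+ 2 - c 2)) / 2%:R.
Proof.
move=> ij jk ik.
have := det_submx_uniq (t := [tuple i; j; k]).
rewrite /= !inE negb_or ij ik jk det_mx33 !mxE /= !principal_minor1 => /(_ isT) <-.
have -> : 3%:R * c 1 * (c 1 ^+ 2 - c 2) =
    c 1 * (A i j ^+ 2 + A j k ^+ 2 + A i k ^+ 2).
  by rewrite !principal_minor2 //; ring.
by rewrite (Asym j i) (Asym k j) (Asym k i); field.
Qed.

Lemma equal_principal_minors_ab :
  exists al be, forall S : {set 'I_n}, c #|S| = \det (ab_mx #|S| al be).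
Proof.
have [be [Asq Atri]] := off_diag_scale principal_minor2 principal_minor3.
have [e [e2 Aoff]] := sign_pattern AT Asq Atri.
exists (c 1), be => S.
by rewrite -minorA (det_principal_signed_ab_mx e2 principal_minor1 Aoff).
Qed.

End EqualPrincipalMinors.

Definition is_det_rep (R : realType) d (a : 'I_d -> R) (A : 'M[R]_d) : Prop :=
  forall lam s, p_a a (\prod_(i < d) ('X + (lam i)%:P)) s =
    \det ('X%:M + map_mx polyC (diag_mx (\row_i lam i) + s *: A)).

Section NuijCoefficients.
Variables (R : realType) (d : nat) (a : 'I_d -> R).

(* [k! a_k] in the paper's indexing, where [a i] stands for [a_(i+1)]; [a_0 = 1]. *)
Definition nuij_coef (k : nat) : R :=
  if k is k'.+1 then k`!%:R * oapp a 0 (insub k') else 1.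

Lemma nuij_coefS (i : 'I_d) : nuij_coef i.+1 = (i.+1)`!%:R * a i.
Proof. by rewrite /nuij_coef valK. Qed.

Lemma horner0_p_a p s :
  (p_a a p s).[0] = \sum_(k < d.+1) nuij_coef k * s ^+ k * p`_k.
Proof.
rewrite /p_a hornerD horner_sum horner_coef0 big_ord_recl.
congr (_ + _); first by rewrite /= mulr1 mul1r.
apply: eq_bigr => i _.
rewrite hornerZ horner_coef0 coef_derivn addn0 ffactnn /= valK /= -mulr_natr.
ring.
Qed.

Lemma horner0_p_a_prod (mu : 'I_d -> R) s :
  (p_a a (\prod_(j < d) ('X + (mu j)%:P)) s).[0] =
  \sum_(S : {set 'I_d}) nuij_coef #|S| * s ^+ #|S| * \prod_(j in ~: S) mu j.
Proof.
rewrite horner0_p_a.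
under eq_bigr do rewrite coef_prod_XaddC big_distrr.
rewrite (partition_big (fun S : {set 'I_d} => (inord #|S| : 'I_d.+1)) xpredT) //=.
apply: eq_bigr => k _; apply: eq_big => [S | S /eqP <-] //.
have hS : (#|S| < d.+1)%N by rewrite ltnS -[d in (_ <= d)%N]card_ord max_card.
by rewrite -val_eqE /= inordK.
Qed.

Lemma p_aZ c p s : p_a a (c *: p) s = c *: p_a a p s.
Proof.
rewrite /p_a scalerDr scaler_sumr; congr (_ + _); apply: eq_bigr => i _.
by rewrite derivnZ !scalerA mulrC.
Qed.

Lemma p_a_comp_XaddC p s x :
  p_a a (p \Po ('X + x%:P)) s = p_a a p s \Po ('X + x%:P).
Proof.
rewrite /p_a comp_polyD -[_ \Po _ in RHS]/(comp_poly ('X + x%:P) _) raddf_sum.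
by congr (_ + _); apply: eq_bigr => i _; rewrite /= comp_polyZ -!derivnS derivn_comp_XaddC.
Qed.

Lemma det_rep_principal_minors (A : 'M[R]_d) :
  is_det_rep a A -> forall S, \det (principal_mx S A) = nuij_coef #|S|.
Proof.
move=> rep S; apply/eqP; rewrite -subr_eq0; apply/eqP; move: S.
apply: (subset_coef_eq0 (c := fun S => \det (principal_mx S A) - nuij_coef #|S|)) => mu.
have := congr1 (horner^~ 0) (rep mu 1).
rewrite horner_det_XaddC horner0_p_a_prod raddf0 add0r scale1r det_diag_addmx.
under eq_bigr do rewrite expr1n mulr1.
by move=> E; under eq_bigr do rewrite mulrBl mulrC; rewrite sumrB -E subrr.
Qed.

Lemma nuij_coef_ab al be :
  (forall S : {set 'I_d}, nuij_coef #|S| = \det (ab_mx #|S| al be)) ->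
  forall i : 'I_d,
    a i = (i.+1)`!%:R^-1 * t_ab al be i.+1 /\
    a i = (i.+1)`!%:R^-1 * ((al - be) ^+ i * (al + i%:R * be)).
Proof.
move=> coefE i.
have wI : injective (widen_ord (ltn_ord i)) by move=> x y /(congr1 val) /= /val_inj.
have := coefE (widen_ord (ltn_ord i) @: setT).
rewrite card_imset // cardsT card_ord nuij_coefS => E.
have ai : a i = (i.+1)`!%:R^-1 * t_ab al be i.+1.
  by rewrite -[t_ab _ _ _]/(\det (ab_mx _ al be)) -E mulKf // pnatr_eq0 -lt0n fact_gt0.
by rewrite ai -[t_ab _ _ _]/(\det (ab_mx _ al be)) det_ab_mx.
Qed.

End NuijCoefficients.

Lemma principal_minors_ab_mx (R : realType) d (a : 'I_d -> R) al be :
  (forall i : 'I_d, a i = (i.+1)`!%:R^-1 * t_ab al be i.+1) ->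
  forall S, \det (principal_mx S (ab_mx d al be)) = nuij_coef a #|S|.
Proof.
move=> aE S.
rewrite (@det_principal_signed_ab_mx _ _ _ al be (fun=> 1)) => [|i|i|i j /negbTE ij].
- have : (#|S| <= d)%N by rewrite -[d in (_ <= d)%N]card_ord max_card.
  case: #|S| => [|k] kd; first by rewrite det_mx00.
  rewrite -[k]/(val (Ordinal kd)) nuij_coefS aE mulrA mulfV ?mul1r //.
  by rewrite pnatr_eq0 -lt0n fact_gt0.
- exact: expr1n.
- by rewrite mxE eqxx.
- by rewrite mxE ij !mulr1.
Qed.

Lemma ab_mx_det_rep (R : realType) d (a : 'I_d -> R) al be :
  (forall i : 'I_d, a i = (i.+1)`!%:R^-1 * t_ab al be i.+1) ->
  is_det_rep a (ab_mx d al be).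
Proof.
move=> /principal_minors_ab_mx coefE lam s.
apply: eq_poly_horner => x.
rewrite -[x in LHS]add0r -horner_comp_XaddC -p_a_comp_XaddC prod_XaddC_comp.
rewrite horner0_p_a_prod horner_det_XaddC.
have -> : x%:M + (diag_mx (\row_i lam i) + s *: ab_mx d al be) =
    diag_mx (\row_j (lam j + x)) + s *: ab_mx d al be.
  by apply/matrixP => i j; rewrite !mxE; case: eqP => _ /=; ring.
rewrite det_diag_addmx; apply: eq_bigr => S _.
by rewrite det_principal_mxZ coefE; ring.
Qed.

(* [z |v|^2 = v N conj(v)^T], which is real because [N] is real symmetric. *)
Lemma sym_eigenvalue_real (R : rcfType) n (N : 'M[R]_n) (z : R[i]) (v : 'rV[R[i]]_n) :
  N^T = N -> v != 0 -> v *m map_mx (real_complex R) N = z *: v -> z \is Num.real.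
Proof.
set fC := real_complex R => NT nv ev.
have Nsym i j : N j i = N i j by rewrite -[in LHS]NT mxE.
have vN j : \sum_i v 0 i * fC (N i j) = z * v 0 j.
  have := congr1 (fun A : 'rV_n => A 0 j) ev; rewrite /= !mxE => <-.
  by apply: eq_bigr => i _; rewrite mxE.
pose ss := \sum_j v 0 j * (v 0 j)^*.
pose q := \sum_j \sum_i v 0 i * fC (N i j) * (v 0 j)^*.
have qE : q = z * ss.
  rewrite /q /ss big_distrr; apply: eq_bigr => j _.
  by rewrite -big_distrl /= vN mulrA.
have q_real : q^* = q.
  rewrite /q rmorph_sum /=; under eq_bigr do rewrite rmorph_sum /=.
  rewrite exchange_big /=; apply: eq_bigr => i _; apply: eq_bigr => j _.
  have fC_conj x : (fC x)^* = fC x by exact: conjc_real.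
  by rewrite !rmorphM /= conjCK Nsym fC_conj; ring.
have ss_ge0 : 0 <= ss by apply: sumr_ge0 => j _; exact: mulcJ_ge0.
have ss_neq0 : ss != 0.
  apply: contra nv => /eqP ss0; apply/eqP/rowP => j; rewrite mxE.
  have /eqP := psumr_eq0P (fun j _ => mulcJ_ge0 (v 0 j)) ss0 (i := j) isT.
  by rewrite mulf_eq0 conjc_eq0 orbb => /eqP.
have -> : z = q / ss by rewrite qE mulfK.
apply: rpred_div; last exact: ger0_real.
by rewrite CrealE q_real.
Qed.

Section Hyperbolicity.
Variable R : realType.
Local Notation fC := (real_complex R).

Lemma hyperbolicE (p : {poly R}) :
  hyperbolic p <-> p != 0 /\ forall z, root (map_poly fC p) z -> z \is Num.real.
Proof. by rewrite /hyperbolic (eq_map_poly (g := fC)). Qed.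

Lemma hyperbolic_det_sym n (N : 'M[R]_n) (c : R) : N^T = N -> c != 0 ->
  hyperbolic (c *: \det ('X%:M + map_mx polyC N)).
Proof.
move=> NT c0; apply/hyperbolicE.
have -> : \det ('X%:M + map_mx polyC N) = char_poly (- N).
  by rewrite /char_poly /char_poly_mx map_mxN opprK.
split; first by rewrite scaler_eq0 negb_or c0 monic_neq0 // char_poly_monic.
move=> z; rewrite map_polyZ rootZ ?fmorph_eq0 // map_char_poly.
rewrite -eigenvalue_root_char => /eigenvalueP [v ev nv].
by apply: (sym_eigenvalue_real _ nv ev); rewrite linearN /= NT.
Qed.

Lemma hyperbolic_factor n (p : {poly R}) : (size p).-1 = n -> hyperbolic p ->
  exists c (r : 'I_n -> R), c != 0 /\ p = c *: \prod_(i < n) ('X - (r i)%:P).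
Proof.
elim: n p => [|n IH] p sp /hyperbolicE [p0 p_real].
  have /size_poly1P [c c0 ->] : size p == 1.
    by move: sp p0; rewrite -size_poly_eq0; case: (size p) => [|[]].
  by exists c, (fun=> 0); rewrite big_ord0 -alg_polyC.
have : size (map_poly fC p) != 1 by rewrite size_map_poly; move: sp; case: (size p) => [|[]].
case/closed_rootP => z rz.
have /complex_realP [r zr] := p_real z rz.
move: rz; rewrite zr fmorph_root => /factor_theorem [q pq].
have q0 : q != 0 by apply: contra p0; rewrite pq => /eqP ->; rewrite mul0r.
have sq : (size q).-1 = n.
  by move: sp; rewrite pq size_Mmonic ?monicXsubC // size_XsubC addn2 => /= ->.
have q_hyp : hyperbolic q.
  apply/hyperbolicE; split=> // w rw; apply: p_real.
  by rewrite pq rmorphM rootM rw.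
have [c [rq [c0 qE]]] := IH q sq q_hyp.
exists c, (fun i : 'I_n.+1 => oapp rq r (insub (val i))); split => //.
rewrite pq qE -scalerAl big_ord_recr /= insubF ?ltnn //=.
by congr (_ *: (_ * _)); apply: eq_bigr => i _; rewrite valK.
Qed.

Lemma det_rep_nuij d (a : 'I_d -> R) (A : 'M[R]_d) :
  A^T = A -> is_det_rep a A -> nuij_seq a.
Proof.
move=> AT rep p p_hyp sp s.
have [c [r [c0 ->]]] := hyperbolic_factor sp p_hyp.
have -> : \prod_(i < d) ('X - (r i)%:P) = \prod_(i < d) ('X + (- r i)%:P).
  by apply: eq_bigr => i _; rewrite polyCN.
rewrite p_aZ rep; apply: hyperbolic_det_sym => //.
by rewrite linearD /= tr_diag_mx linearZ /= AT.
Qed.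

End Hyperbolicity.

Theorem theoremB (R : realType) (d : nat) (a : 'I_d -> R) :
  (nuij_seq a /\ univ_det_rep a) <->
  exists alpha beta : R, forall i : 'I_d,
    a i = (i.+1)`!%:R^-1 * t_ab alpha beta i.+1 /\
    a i = (i.+1)`!%:R^-1 * ((alpha - beta) ^+ i * (alpha + i%:R * beta)).
Proof.
split=> [[_ [A [AT rep]]] | [al [be aE]]].
  have [al [be abE]] := equal_principal_minors_ab AT (det_rep_principal_minors rep).
  by exists al, be; apply: nuij_coef_ab.
have rep := ab_mx_det_rep (fun i => (aE i).1).
have abT : (ab_mx d al be)^T = ab_mx d al be.
  by apply/matrixP => i j; rewrite !mxE eq_sym.
by split; [apply: det_rep_nuij rep | exists (ab_mx d al be)].
Qed.
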